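(* Let $S$ be an $(l,r)$-framed algebra, $\lambda^1,\lambda^2,\lambda^3\in\mathrm{IS}^{(l,r)}$ and $a_i\in S_{\lambda^i}$. Then: (1) for $\lambda^0\in\lambda^1\star\lambda^2$, $a_1\cdot_{\lambda^0}a_2=(-1)^{s(\lambda^0)+s(\lambda^1)+s(\lambda^2)}a_2\cdot_{\lambda^0}a_1$; (2) for $\lambda^0\in\mathrm{IS}^{(l,r)}$ and $\mu'\in A(\lambda^0,\lambda^1,\lambda^2,\lambda^3)$, $a_1\cdot_{\lambda^0}(a_2\cdot_{\mu'}a_3)=\sum_{\mu\in A(\lambda^0,\lambda^3,\lambda^1,\lambda^2)}(-1)^{s(\mu')+s(\mu)+s(\lambda^2)+s(\lambda^0)}B^{\mu,\mu'}_{\lambda^0,\lambda^3,\lambda^1,\lambda^2}(a_1\cdot_\mu a_2)\cdot_{\lambda^0}a_3$.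
   Context: Let $\mathrm{IS}=\{0,\frac12,\frac1{16}\}$ with fusion rule $\star$ (values are subsets of $\mathrm{IS}$): $0\star h=h\star 0=\{h\}$, $\frac12\star\frac12=\{0\}$, $\frac12\star\frac1{16}=\frac1{16}\star\frac12=\{\frac1{16}\}$, $\frac1{16}\star\frac1{16}=\{0,\frac12\}$. For $h_0,\dots,h_3\in\mathrm{IS}$ put $A(h_0,h_1,h_2,h_3)=\{h: h\in h_2\star h_3,\ h_0\in h_1\star h\}$. For $h\in A(h_0,h_1,h_2,h_3)$, $h'\in A(h_0,h_2,h_1,h_3)$ define $B^{h,h'}_{h_0,h_1,h_2,h_3}\in\mathbb{C}$ by: $B_{*,0,*,*}=B_{*,*,0,*}=1$; $B_{*,\frac12,\frac12,*}=-1$; $B_{a,\frac12,\frac1{16},a'}=B_{a,\frac1{16},\frac12,a'}=i$ if $a$ or $a'$ equals $\frac12$, $-i$ otherwise; $B^{b,b'}_{a,\frac1{16},\frac1{16},a'}=e^{-\pi i/8}$ times: $1$ if $a,a'\ne\frac1{16}$, $a=a'$; $i$ if $a,a'\ne\frac1{16}$, $a\neq a'$; $\frac{1+i}2$ if $a=a'=\frac1{16}$, $b=b'$; $\frac{1-i}2$ if $a=a'=\frac1{16}$, $b\ne b'$. For $l,r\ge0$ let $\mathrm{IS}^{(l,r)}=\mathrm{IS}^l\times\mathrm{IS}^r$, $\lambda=(h_1,\dots,h_l,\bar h_1,\dots,\bar h_r)$, $s(\lambda)=\sum h_i-\sum \bar h_j$; $\star$ and $A$ are extended componentwise, and $B^{\lambda,\lambda'}_{\lambda^0,\lambda^1,\lambda^2,\lambda^3}=\prod_{i\le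 l}B^{h_i,h_i'}_{h^0_i,h^1_i,h^2_i,h^3_i}\prod_{j\le r}\overline{B^{\bar h_j,\bar h_j'}_{\bar h^0_j,\bar h^1_j,\bar h^2_j,\bar h^3_j}}$. An $(l,r)$-framed algebra is a finite-dimensional $\mathrm{IS}^{(l,r)}$-graded complex vector space $S=\bigoplus S_\lambda$ with bilinear product $\cdot$ and nonzero $1\in S_0$, writing $a\cdot_\lambda b$ for the $S_\lambda$-component of $a\cdot b$, such that (FA1) $S_\lambda=0$ unless $s(\lambda)\in\mathbb{Z}$; (FA2) $S_0=\mathbb{C}1$, $1$ is a two-sided unit; (FA3) $S_{\lambda^1}\cdot S_{\lambda^2}\subset\bigoplus_{\lambda\in\lambda^1\star\lambda^2}S_\lambda$; (FA4) for $a_i\in S_{\lambda^i}$ and $\lambda'\in A(\lambda^0,\lambda^2,\lambda^1,\lambda^3)$: $a_2\cdot_{\lambda^0}(a_1\cdot_{\lambda'}a_3)=\sum_{\lambda\in A(\lambda^0,\lambda^1,\lambda^2,\lambda^3)}B^{\lambda,\lambda'}_{\lambda^0,\lambda^1,\lambda^2,\lambda^3}a_1\cdot_{\lambda^0}(a_2\cdot_\lambda a_3)$. *)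

From HB Require Import structures.
From mathcomp Require Import all_boot all_order all_algebra.
From mathcomp Require Import reals.
From mathcomp Require Import complex.
Set Implicit Arguments. Unset Strict Implicit. Unset Printing Implicit Defensive.
Import Order.TTheory GRing.Theory Num.Theory.
Local Open Scope ring_scope.

Inductive IS := h0 | hhalf | h16.

Definition IS_code (h : IS) : 'I_3 :=
  match h with h0 => inord 0 | hhalf => inord 1 | h16 => inord 2 end.
Definition IS_decode (i : 'I_3) : IS :=
  match val i with 0 => h0 | 1 => hhalf | _ => h16 end.
Lemma IS_codeK : cancel IS_code IS_decode.
Proof. by case; rewrite /IS_decode /= inordK. Qed.
HB.instance Definition _ := Finite.copy IS (can_type IS_codeK).

Definition hval (h : IS) : rat :=
  match h with h0 => 0 | hhalf => 1/2 | h16 => 1/16 end.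

(* fusion rule: fus a b h  <=>  h \in a * b *)
Definition fus (a b h : IS) : bool :=
  match a, b with
  | h0, _ => h == b
  | _, h0 => h == a
  | hhalf, hhalf => h == h0
  | hhalf, h16 | h16, hhalf => h == h16
  | h16, h16 => (h == h0) || (h == hhalf)
  end.

Definition Aset (a0 a1 a2 a3 h : IS) : bool := fus a2 a3 h && fus a1 h a0.

(* e^{-pi i/8} = cos(pi/8) - i sin(pi/8) *)
Definition zeta16 (R : realType) : R[i] :=
  Complex (Num.sqrt (2 + Num.sqrt 2) / 2) (- (Num.sqrt (2 - Num.sqrt 2) / 2)).

Definition iC (R : realType) : R[i] := Complex 0 1.

(* B^{h,h'}_{a0,a1,a2,a3}  (value 0 on index combinations where it is undefined) *)
Definition Bval (R : realType) (h h' a0 a1 a2 a3 : IS) : R[i] :=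
  match a1, a2 with
  | h0, _ | _, h0 => 1
  | hhalf, hhalf => -1
  | hhalf, h16 | h16, hhalf =>
      if (a0 == hhalf) || (a3 == hhalf) then iC R else - iC R
  | h16, h16 =>
      zeta16 R *
      (if (a0 != h16) && (a3 != h16) then
         (if a0 == a3 then 1 else iC R)
       else if (a0 == h16) && (a3 == h16) then
         (if h == h' then (1 + iC R) / 2 else (1 - iC R) / 2)
       else 0)
  end.

Definition Lam (l r : nat) := ({ffun 'I_l -> IS} * {ffun 'I_r -> IS})%type.

Definition lam0 (l r : nat) : Lam l r := ([ffun => h0], [ffun => h0]).

Definition s_of (l r : nat) (la : Lam l r) : rat :=
  \sum_(i < l) hval (la.1 i) - \sum_(j < r) hval (la.2 j).

Definition fusL (l r : nat) (la1 la2 la : Lam l r) : bool :=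
  [forall i, fus (la1.1 i) (la2.1 i) (la.1 i)] &&
  [forall j, fus (la1.2 j) (la2.2 j) (la.2 j)].

Definition AL (l r : nat) (la0 la1 la2 la3 la : Lam l r) : bool :=
  fusL la2 la3 la && fusL la1 la la0.

Definition BL (R : realType) (l r : nat) (la la' la0 la1 la2 la3 : Lam l r) : R[i] :=
  (\prod_(i < l) Bval R (la.1 i) (la'.1 i) (la0.1 i) (la1.1 i) (la2.1 i) (la3.1 i)) *
  (\prod_(j < r) (Bval R (la.2 j) (la'.2 j) (la0.2 j) (la1.2 j) (la2.2 j) (la3.2 j))^*).

(* (-1)^q for q \in Z (q rational); for non-integral q we use floor q, a value
   that never matters. *)
Definition sgnq (R : realType) (q : rat) : R[i] := (-1) ^ (Num.floor q).

(* An (l,r)-framed algebra, presented through its homogeneous components: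
   V la = S_la (finite-dimensional), mul la1 la2 la a b = a .la b (the
   S_la-component of a.b for a \in S_la1, b \in S_la2), one = 1 \in S_0. *)
Definition is_framed_algebra (R : realType) (l r : nat)
    (V : Lam l r -> vectType R[i])
    (mul : forall la1 la2 la : Lam l r, V la1 -> V la2 -> V la)
    (one : V (lam0 l r)) : Prop :=
  (forall la1 la2 la (b : V la2), linear (fun a : V la1 => mul la1 la2 la a b)) /\
  (forall la1 la2 la (a : V la1), linear (fun b : V la2 => mul la1 la2 la a b)) /\
  (forall la, s_of la \isn't a Num.int -> forall v : V la, v = 0) /\
  one != 0 /\ (forall v : V (lam0 l r), exists c : R[i], v = c *: one) /\
  (forall la (a : V la), mul (lam0 l r) la la one a = a) /\
  (forall la (a : V la), mul la (lam0 l r) la a one = a) /\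
  (forall la1 la2 la (a : V la1) (b : V la2), ~~ fusL la1 la2 la -> mul la1 la2 la a b = 0) /\
  (forall la0 la1 la2 la3 la' (a1 : V la1) (a2 : V la2) (a3 : V la3),
     AL la0 la2 la1 la3 la' ->
     mul la2 la' la0 a2 (mul la1 la3 la' a1 a3) =
     \sum_(la | AL la0 la1 la2 la3 la)
        BL R la la' la0 la1 la2 la3 *: mul la1 la la0 a1 (mul la2 la3 la a2 a3)).

(* With lambda^3 = 0 and a3 = 1, the sum in the braiding axiom (FA4) has the
   single term lambda = lambda^1, so a1 . a2 = B a2 . a1 where B is,
   componentwise, B^{y,x}_{h,x,y,0} = e^{-pi i (h_x + h_y - h)} = zeta^(8 (h_x + h_y - h))
   with zeta = e^{-pi i/8}.  By (FA1) a nonzero product only involves weights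
   lambda with s(lambda) integral, and then this phase is (-1)^(s(l0) + s(l1) + s(l2)),
   which is (1).  For (2), commute a2 . a3 by (1), move a3 to the front by (FA4),
   and commute each a3 . (a1 . a2) back by (1): the two signs combine to the
   stated one because 2 s(lambda^3) is even. *)

From HB Require Import structures.
From mathcomp Require Import all_boot all_order all_algebra sesquilinear.
From mathcomp Require Import reals complex.
From mathcomp Require Import ring lra.
Import Order.TTheory GRing.Theory Num.Theory.
Local Open Scope ring_scope.

Section Sign.
Variable R : realType.

Lemma sgnqDz (x q : rat) : q \is a Num.int -> sgnq R (x + q) = sgnq R x * sgnq R q.
Proof. by move=> qZ; rewrite /sgnq floorDrz // expfzDr // oppr_eq0 oner_eq0. Qed.

Lemma sgnq_int (m : int) : sgnq R m%:~R = (-1) ^ m.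
Proof. by rewrite /sgnq intrKfloor. Qed.

Lemma sgnqD_double (x q : rat) : q \is a Num.int -> sgnq R (x + q *+ 2) = sgnq R x.
Proof.
case/intrP=> m ->; rewrite -rmorphMn sgnqDz ?intr_int // sgnq_int.
by rewrite -mulr_natr (mulrC m) -exprz_exp -exprnP sqrrN expr1n exp1rz mulr1.
Qed.

End Sign.

Section Zeta16.
Variable R : realType.
Local Notation zeta := (zeta16 R).

Lemma zeta16_sqr : zeta ^+ 2 = Complex (Num.sqrt 2 / 2) (- (Num.sqrt 2 / 2)).
Proof.
rewrite expr2 /zeta16 -[(_ +i* _)%C * (_ +i* _)%C]/(_ +i* _)%C.
have := sqr_sqrtr (ler0n R 2); have := sqrtr_ge0 (2 : R).
set t := Num.sqrt 2; rewrite expr2 => t_ge0 t_sqr.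
have t_le2 : t <= 2 by nra.
have ha : Num.sqrt (2 + t) ^+ 2 = 2 + t by apply: sqr_sqrtr; lra.
have hb : Num.sqrt (2 - t) ^+ 2 = 2 - t by apply: sqr_sqrtr; lra.
have hab : Num.sqrt (2 + t) * Num.sqrt (2 - t) = t.
  rewrite -sqrtrM; last lra.
  by have -> : (2 + t) * (2 - t) = 2 by nra.
move: ha hb hab; rewrite !expr2.
by set a := Num.sqrt _; set b := Num.sqrt _ => ha hb hab; congr Complex; nra.
Qed.

Lemma zeta16_exp4 : zeta ^+ 4 = - iC R.
Proof.
rewrite (_ : 4 = 2 * 2)%N // exprM zeta16_sqr expr2 /iC.
rewrite -[(_ +i* _)%C * (_ +i* _)%C]/(_ +i* _)%C -[- (_ +i* _)%C]/(_ +i* _)%C.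
have := sqr_sqrtr (ler0n R 2); rewrite expr2; set t := Num.sqrt 2 => t_sqr.
by congr Complex; nra.
Qed.

Lemma zeta16_exp8 : zeta ^+ 8 = -1.
Proof. by rewrite (_ : 8 = 4 * 2)%N // exprM zeta16_exp4 sqrrN sqr_i. Qed.

Lemma zeta16_neq0 : zeta != 0.
Proof.
apply: contra_eqN zeta16_exp8 => /eqP->.
by rewrite expr0n eq_sym oppr_eq0 oner_eq0.
Qed.

Lemma norm_zeta16 : `|zeta| = 1.
Proof. by apply/eqP; rewrite -(pexpr_eq1 (n := 8)) // -normrX zeta16_exp8 normrN1. Qed.

Lemma conj_zeta16z (k : int) : (zeta ^ k)^* = zeta ^ (- k).
Proof.
rewrite (rmorphXz Num.conj _ (_ : zeta \is a GRing.unit)) ?unitfE ?zeta16_neq0 //=.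
suff -> : zeta^* = zeta^-1 by rewrite exprz_inv.
by rewrite invC_norm norm_zeta16 expr1n invr1 mul1r.
Qed.

Lemma zeta16z_sgnq (k : int) (q : rat) :
  q \is a Num.int -> k%:~R = 8 * q -> zeta ^ k = sgnq R q.
Proof.
case/intrP=> m -> km; have -> : k = 8 * m by apply: (@intr_inj rat); rewrite km rmorphM.
by rewrite -exprz_exp -exprnP zeta16_exp8 sgnq_int.
Qed.
End Zeta16.

Lemma eqISE (x y : IS) :
  (x == y) = match x, y with h0, h0 | hhalf, hhalf | h16, h16 => true | _, _ => false end.
Proof. by case: x; case: y; rewrite ?eqxx //; apply/eqP. Qed.

Definition braid_exp (x y h : IS) : int :=
  match x, y with
  | h0, _ | _, h0 => 0
  | hhalf, hhalf => 8
  | hhalf, h16 | h16, hhalf => 4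
  | h16, h16 => if h == h0 then 1 else -3
  end.

Lemma braid_expE x y h :
  fus x y h -> (braid_exp x y h)%:~R = 8 * (hval x + hval y - hval h) :> rat.
Proof. by case: x; case: y; case: h; rewrite /= ?eqISE // => _; apply/eqP; vm_compute. Qed.

Lemma Bval_unit_r (R : realType) h h' x y w :
  fus x y w -> Bval R h h' w x y h0 = zeta16 R ^ braid_exp x y w.
Proof.
have zeta_exp4 : zeta16 R ^ (4 : int) = - iC R by rewrite -exprnP zeta16_exp4.
case: x; case: y; case: w; rewrite /= ?eqISE //= => _; rewrite ?expr0z ?expr1z ?mulr1 //.
- by rewrite -exprnP zeta16_exp8.
- rewrite (_ : -3 = 1 + (- 4)) // expfzDr ?zeta16_neq0 // expr1z -invr_expz zeta_exp4.
  congr (_ * _); apply: esym; apply: mulr1_eq.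
  by rewrite mulNr -expr2 sqr_i opprK.
Qed.

Section Weights.
Variables (l r : nat).
Implicit Types A B C D : Lam l r.

Lemma fusL_sym A B C : fusL A B C = fusL B A C.
Proof.
have fus_sym x y h : fus x y h = fus y x h by case: x; case: y; case: h.
by rewrite /fusL; congr andb; apply: eq_forallb => i; rewrite fus_sym.
Qed.

Lemma fusL_lam0 A C : fusL A (lam0 l r) C = (C == A).
Proof.
have fus_h0 x h : fus x h0 h = (h == x) by case: x; case: h; rewrite /= ?eqISE.
have fus_h0_ffun n (f g : {ffun 'I_n -> IS}) :
    [forall i, fus (f i) ([ffun=> h0] i) (g i)] = (g == f).
  apply/forallP/eqP => [E|->]; last by move=> i; rewrite ffunE fus_h0.
  by apply/ffunP => i; apply/eqP; move: (E i); rewrite ffunE fus_h0.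
by case: A C => [A1 A2] [C1 C2]; rewrite /fusL xpair_eqE !fus_h0_ffun.
Qed.

Lemma AL_lam0 A B C D : AL C A B (lam0 l r) D = (D == B) && fusL A D C.
Proof. by rewrite /AL fusL_lam0. Qed.

Definition braid_expL A B C : int :=
  \sum_(i < l) braid_exp (A.1 i) (B.1 i) (C.1 i)
  - \sum_(j < r) braid_exp (A.2 j) (B.2 j) (C.2 j).

Lemma braid_expLE A B C :
  fusL A B C -> (braid_expL A B C)%:~R = 8 * (s_of A + s_of B - s_of C).
Proof.
case/andP=> /forallP fus1 /forallP fus2.
rewrite /braid_expL /s_of rmorphB !rmorph_sum /=.
under eq_bigr do rewrite braid_expE ?fus1 //.
under [X in _ - X]eq_bigr do rewrite braid_expE ?fus2 //.
by rewrite -!mulr_sumr !sumrB !big_split /=; ring.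
Qed.

Variable R : realType.
Local Notation zeta := (zeta16 R).

Lemma BL_unit_r A B C :
  fusL A B C -> BL R B A C A B (lam0 l r) = zeta ^ braid_expL A B C.
Proof.
have zeta_prod I (s : seq I) (P : pred I) (F : I -> int) :
    \prod_(i <- s | P i) zeta ^ F i = zeta ^ (\sum_(i <- s | P i) F i).
  apply: esym; apply: (big_morph (fun k : int => zeta ^ k)) => [k k'|].
    by rewrite expfzDr // zeta16_neq0.
  by rewrite expr0z.
case/andP=> /forallP fus1 /forallP fus2.
rewrite /BL /braid_expL.
under eq_bigr do rewrite ffunE Bval_unit_r ?fus1 //.
under [X in _ * X]eq_bigr do rewrite ffunE Bval_unit_r ?fus2 // conj_zeta16z.
by rewrite !zeta_prod sumrN -expfzDr // zeta16_neq0.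
Qed.

Lemma BL_unit_r_sgnq A B C :
    fusL A B C -> s_of A \is a Num.int -> s_of B \is a Num.int -> s_of C \is a Num.int ->
  BL R B A C A B (lam0 l r) = sgnq R (s_of C + s_of B + s_of A).
Proof.
move=> fABC AZ BZ CZ.
have -> : s_of C + s_of B + s_of A = (s_of A + s_of B - s_of C) + s_of C *+ 2 by ring.
rewrite sgnqD_double // BL_unit_r //; apply: zeta16z_sgnq; last exact: braid_expLE.
by apply: rpredB => //; apply: rpredD.
Qed.
End Weights.

Section FramedAlgebra.
Variables (R : realType) (l r : nat) (V : Lam l r -> vectType R[i]).
Variables (mul : forall la1 la2 la : Lam l r, V la1 -> V la2 -> V la) (one : V (lam0 l r)).
Hypothesis fmul_linear_l :
  forall la1 la2 la (b : V la2), linear (fun a : V la1 => mul la1 la2 la a b).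
Hypothesis fmul_linear_r :
  forall la1 la2 la (a : V la1), linear (fun b : V la2 => mul la1 la2 la a b).
Hypothesis nonint_component_eq0 :
  forall la, s_of la \isn't a Num.int -> forall v : V la, v = 0.
Hypothesis fmulr1 : forall la (a : V la), mul la (lam0 l r) la a one = a.
Hypothesis fmul_braiding :
  forall la0 la1 la2 la3 la' (a1 : V la1) (a2 : V la2) (a3 : V la3),
  AL la0 la2 la1 la3 la' ->
  mul la2 la' la0 a2 (mul la1 la3 la' a1 a3) =
  \sum_(la | AL la0 la1 la2 la3 la)
     BL R la la' la0 la1 la2 la3 *: mul la1 la la0 a1 (mul la2 la3 la a2 a3).

Definition fmul la1 la2 la : {bilinear V la1 -> V la2 -> V la} :=
  HB.pack (mul la1 la2 la)
    (bilinear_isBilinear.Build _ _ _ _ _ _ (mul la1 la2 la)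
       (fmul_linear_l la1 la2 la, fmul_linear_r la1 la2 la)).

Lemma fmul0l la1 la2 la (b : V la2) : mul la1 la2 la 0 b = 0.
Proof. exact: (linear0l (fmul la1 la2 la)). Qed.

Lemma fmul0r la1 la2 la (a : V la1) : mul la1 la2 la a 0 = 0.
Proof. exact: (linear0r (fmul la1 la2 la)). Qed.

Lemma fmulZr la1 la2 la (a : V la1) c (b : V la2) :
  mul la1 la2 la a (c *: b) = c *: mul la1 la2 la a b.
Proof. exact: (linearZr_LR (fmul la1 la2 la)). Qed.

Lemma fmul_neq0_int {la1 la2 la} {a : V la1} {b : V la2} : mul la1 la2 la a b != 0 ->
  [/\ s_of la1 \is a Num.int, s_of la2 \is a Num.int & s_of la \is a Num.int].
Proof.
move=> nz; split; apply/negPn/negP => /nonint_component_eq0 v0; move/eqP: nz; apply.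
- by rewrite (v0 a) fmul0l.
- by rewrite (v0 b) fmul0r.
- exact: v0.
Qed.

Lemma fmulC_sgnq {la1 la2 la0} (a1 : V la1) (a2 : V la2) : fusL la1 la2 la0 ->
  mul la1 la2 la0 a1 a2 = sgnq R (s_of la0 + s_of la1 + s_of la2) *: mul la2 la1 la0 a2 a1.
Proof.
move=> f120.
have swap : mul la1 la2 la0 a1 a2 = BL R la1 la2 la0 la2 la1 (lam0 l r) *: mul la2 la1 la0 a2 a1.
  have AL_la2 : AL la0 la1 la2 (lam0 l r) la2 by rewrite AL_lam0 eqxx.
  rewrite -{1}(fmulr1 _ a2) fmul_braiding // (eq_bigl (pred1 la1)) ?big_pred1_eq ?fmulr1 //.
  by move=> la; rewrite AL_lam0 andb_idr // => /eqP->; rewrite fusL_sym.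
have [a21_0|nz] := eqVneq (mul la2 la1 la0 a2 a1) 0; first by rewrite swap a21_0 !scaler0.
have [s2Z s1Z s0Z] := fmul_neq0_int nz.
by rewrite swap BL_unit_r_sgnq // fusL_sym.
Qed.

Lemma fmulA_braid la0 la1 la2 la3 mu' (a1 : V la1) (a2 : V la2) (a3 : V la3) :
  AL la0 la1 la2 la3 mu' ->
  mul la1 mu' la0 a1 (mul la2 la3 mu' a2 a3) =
  \sum_(mu | AL la0 la3 la1 la2 mu)
     (sgnq R (s_of mu' + s_of mu + s_of la2 + s_of la0) * BL R mu mu' la0 la3 la1 la2)
       *: mul mu la3 la0 (mul la1 la2 mu a1 a2) a3.
Proof.
case/andP=> f23 f1m.
have AL_mu' : AL la0 la1 la3 la2 mu' by rewrite /AL fusL_sym f23.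
rewrite (fmulC_sgnq a2 a3 f23) fmulZr fmul_braiding // scaler_sumr.
apply: eq_bigr => mu /andP [f12 f3m]; rewrite (fmulC_sgnq a3 _ f3m) !scalerA.
set W := mul mu la3 la0 _ a3.
have [->|nz] := eqVneq W 0; first by rewrite !scaler0.
have [muZ s3Z s0Z] := fmul_neq0_int nz.
congr (_ *: _); rewrite mulrCA mulrC -sgnqDz; last exact: rpredD (rpredD s0Z s3Z) muZ.
suff -> : s_of mu' + s_of la2 + s_of la3 + (s_of la0 + s_of la3 + s_of mu) =
          s_of mu' + s_of mu + s_of la2 + s_of la0 + s_of la3 *+ 2 by rewrite sgnqD_double.
by ring.
Qed.
End FramedAlgebra.

Theorem mainTheorem2 (R : realType) (l r : nat)
    (V : Lam l r -> vectType R[i])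
    (mul : forall la1 la2 la : Lam l r, V la1 -> V la2 -> V la)
    (one : V (lam0 l r))
    (HS : is_framed_algebra mul one)
    (la1 la2 la3 : Lam l r) (a1 : V la1) (a2 : V la2) (a3 : V la3) :
  (forall la0 : Lam l r, fusL la1 la2 la0 ->
     mul la1 la2 la0 a1 a2 =
     sgnq R (s_of la0 + s_of la1 + s_of la2) *: mul la2 la1 la0 a2 a1) /\
  (forall (la0 mu' : Lam l r), AL la0 la1 la2 la3 mu' ->
     mul la1 mu' la0 a1 (mul la2 la3 mu' a2 a3) =
     \sum_(mu | AL la0 la3 la1 la2 mu)
        (sgnq R (s_of mu' + s_of mu + s_of la2 + s_of la0)
         * BL R mu mu' la0 la3 la1 la2) *: mul mu la3 la0 (mul la1 la2 mu a1 a2) a3).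
Proof.
have [lin_l [lin_r [FA1 [_ [_ [_ [unit_r [_ FA4]]]]]]]] := HS.
by split=> [la0 | la0 mu']; [apply: fmulC_sgnq | apply: fmulA_braid].
Qed.
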